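(* Let $n \ge 0$. Then, in $W$ and in every $W_{n+k}$ ($k\ge 0$): (i) every occurrence of $W_n$ other than the first one is immediately preceded by either $W_n$ or $W_n1$; (ii) every occurrence of $W_n$ other than the last one (in $W$: every occurrence) is immediately followed by either $W_n$ or $1W_n$; (iii) the word $W_nW_nW_nW_n$ does not occur.
   Context: Words are finite strings over $\{0,1\}$. Define $W_0 = 0$ and $W_{m+1} = W_m W_m 1 W_m$ for $m\ge 0$. Since each $W_m$ is an initial segment of $W_{m+1}$, there is a unique infinite word $W = W(0)W(1)W(2)\cdots$ (indexed from position $0$) such that every $W_m$ is an initial segment of $W$. An occurrence of a word $u$ in $v$ is a position where $u$ appears as a contiguous block of $v$. *)

(* Words over {0,1} are encoded as seq bool: 0 = false, 1 = true. *)
From mathcomp Require Import all_boot.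
Set Implicit Arguments. Unset Strict Implicit. Unset Printing Implicit Defensive.

Fixpoint Wf (m : nat) : seq bool :=
  match m with
  | 0 => [:: false]
  | m'.+1 => Wf m' ++ Wf m' ++ true :: Wf m'
  end.

(* w is the limit word: every W_m is an initial segment of w *)
Definition has_all_W_prefixes (w : nat -> bool) : Prop :=
  forall m i, i < size (Wf m) -> w i = nth false (Wf m) i.

Definition occ (u v : seq bool) (p : nat) : Prop :=
  p + size u <= size v /\ take (size u) (drop p v) = u.

Definition occI (u : seq bool) (w : nat -> bool) (p : nat) : Prop :=
  forall j, j < size u -> w (p + j) = nth false u j.

Definition preceded (x v : seq bool) (p : nat) : Prop :=
  size x <= p /\ occ x v (p - size x).
Definition precededI (x : seq bool) (w : nat -> bool) (p : nat) : Prop :=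
  size x <= p /\ occI x w (p - size x).

Definition followed (u x v : seq bool) (p : nat) : Prop := occ x v (p + size u).
Definition followedI (u x : seq bool) (w : nat -> bool) (p : nat) : Prop :=
  occI x w (p + size u).

From mathcomp Require Import all_boot.
From mathcomp Require Import zify.
Set Implicit Arguments. Unset Strict Implicit. Unset Printing Implicit Defensive.

(* Since W_{m+1} = W_m W_m 1 W_m, every W_{n+k} is a concatenation of copies of
   W_n separated by gaps that are either empty or the single letter 1; the gap
   sequence at level k+1 arises from the one at level k by replacing each gap g
   with 0, 1, g (and appending 0, 1).  The key fact is synchronization: every
   occurrence of W_n in such a word starts a block.  By induction on n, an
   occurrence of W_{n+1} gives occurrences of W_n at offsets 0, |W_n| and
   2|W_n|+1, and since the coarse blocks are at least 3|W_n|+1 apart, this pins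
   the first one to the start of a coarse block.  Then (i) and (ii) are read off
   the gaps, and a factor W_n^4 would need three consecutive empty gaps, which
   the refined gap sequence never has.  Statements about W follow by passing to
   a long enough prefix W_m. *)

Lemma occP (u v : seq bool) p : occ u v p <->
  p + size u <= size v /\ forall j, j < size u -> nth false v (p + j) = nth false u j.
Proof.
rewrite /occ; split=> [[Hs Ht] | [Hs Hn]]; split=> //.
- by move=> j Hj; rewrite -Ht nth_take // nth_drop.
- apply: (@eq_from_nth _ false) => [|j]; rewrite size_take size_drop.
    by case: ifP; lia.
  move=> Hj; have {}Hj : j < size u by move: Hj; case: ifP; lia.
  by rewrite nth_take // nth_drop Hn.
Qed.

Lemma occ_cat (a b v : seq bool) p :
  occ (a ++ b) v p -> occ a v p /\ occ b v (p + size a).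
Proof.
move/occP=> [Hs Hn]; rewrite size_cat in Hs; split; apply/occP; split; try lia.
- by move=> j Hj; rewrite Hn ?nth_cat ?Hj // size_cat; lia.
- move=> j Hj; rewrite -addnA Hn ?nth_cat ?size_cat; last lia.
  by case: ifP => H; [lia | rewrite addKn].
Qed.

Lemma occ_drop (x u v : seq bool) p :
  occ u (x ++ v) p -> size x <= p -> occ u v (p - size x).
Proof.
move/occP=> [Hs Hn] Hp; rewrite size_cat in Hs; apply/occP; split; first lia.
move=> j Hj; rewrite -Hn // nth_cat; case: ifP => H; first (move: H; lia).
by congr nth; lia.
Qed.

Lemma occ_shift (x u v : seq bool) p : occ u v p -> occ u (x ++ v) (size x + p).
Proof.
move/occP=> [Hs Hn]; apply/occP; rewrite size_cat; split; first lia.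
move=> j Hj; rewrite nth_cat; case: ifP => H; first (move: H; lia).
by rewrite -Hn //; congr nth; lia.
Qed.

Lemma occ_prefix (u v : seq bool) : occ u (u ++ v) 0.
Proof. by rewrite /occ drop0 take_size_cat // size_cat; split=> //; lia. Qed.

Lemma occ_infix (x u y : seq bool) : occ u (x ++ u ++ y) (size x).
Proof. by rewrite -[size x]addn0; apply/occ_shift/occ_prefix. Qed.

Fixpoint blocks (w : seq bool) (gs : seq bool) : seq bool :=
  if gs is g :: gs' then w ++ nseq g true ++ blocks w gs' else w.

Fixpoint refine_gaps (gs : seq bool) : seq bool :=
  if gs is g :: gs' then [:: false, true, g & refine_gaps gs'] else [:: false; true].

Fixpoint Wgaps (k : nat) : seq bool :=
  if k is k'.+1 then refine_gaps (Wgaps k') else [::].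

Lemma blocks_refine_gaps w gs :
  blocks w (refine_gaps gs) = blocks (w ++ w ++ true :: w) gs.
Proof. by elim: gs => [|g gs IH] //=; rewrite IH -!catA. Qed.

Lemma Wf_blocks n k : Wf (n + k) = blocks (Wf n) (Wgaps k).
Proof.
elim: k n => [|k IH] n; first by rewrite addn0.
by rewrite addnS -addSn IH /= blocks_refine_gaps.
Qed.

Lemma blocks_prefix w gs : exists s, blocks w gs = w ++ s.
Proof. by case: gs => [|g gs] /=; [exists [::]; rewrite cats0 | eexists]. Qed.

Lemma Wf_prefix n k : exists s, Wf (n + k) = Wf n ++ s.
Proof. by rewrite Wf_blocks; apply: blocks_prefix. Qed.

Lemma size_WfS n : size (Wf n.+1) = 3 * size (Wf n) + 1.
Proof. by rewrite /= !size_cat /=; lia. Qed.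

Lemma size_Wf_gt n : n < size (Wf n).
Proof. by elim: n => [|n IH] //; rewrite size_WfS; lia. Qed.

Lemma size_Wf_gt0 n : 0 < size (Wf n).
Proof. by have := size_Wf_gt n; lia. Qed.

(* A block of [blocks w gs] starts at position [p], where [L = size w]. *)
Fixpoint block_start (L : nat) (gs : seq bool) (p : nat) : Prop :=
  p = 0 \/
  if gs is g :: gs' then L + g <= p /\ block_start L gs' (p - (L + g)) else False.

Lemma block_start_sep L gs a b : block_start L gs a -> block_start L gs b ->
  a = b \/ a + L <= b \/ b + L <= a.
Proof.
elim: gs a b => [|g gs IH] a b /=; first by case=> [->|[]] [->|[]]; left.
case=> [->|[Ha Ha']] [->|[Hb Hb']]; try lia.
by have := IH _ _ Ha' Hb'; lia.
Qed.

Lemma block_start_refine L gs x : block_start L (refine_gaps gs) x ->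
  exists2 a, block_start (3 * L + 1) gs a &
    x = a \/ x = a + L \/ x = a + (2 * L + 1).
Proof.
elim: gs x => [|g gs IH] x /=.
  by case=> [|[? [|[? [|[]]]]]] ?; (exists 0; [left | lia]).
case=> [|[? [|[? [|[? /IH [a Ha Hxa]]]]]]] => [?|?|?|];
  try by (exists 0; [left | lia]).
exists (a + (3 * L + 1 + g)); last lia.
right; split; first lia.
by rewrite (_ : _ - _ = a) //; lia.
Qed.

(* Coarse block starts are at least [3 * L + 1] apart, which leaves [p] no room
   but to be one itself. *)
Lemma block_start_coarsen L gs p : 0 < L ->
  block_start L (refine_gaps gs) p -> block_start L (refine_gaps gs) (p + L) ->
  block_start L (refine_gaps gs) (p + (2 * L + 1)) -> block_start (3 * L + 1) gs p.
Proof.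
move=> L0 /block_start_refine[a Ha ?] /block_start_refine[b Hb ?]
  /block_start_refine[c Hc ?].
move: (block_start_sep Ha Hb) (block_start_sep Hb Hc) (block_start_sep Ha Hc).
by move=> *; rewrite (_ : p = a) //; lia.
Qed.

(* Four blocks at distance [L] would need three consecutive empty gaps, but
   every third gap of [refine_gaps gs] is [1]. *)
Lemma no_four_block_starts L gs p : 0 < L ->
  block_start L (refine_gaps gs) p -> block_start L (refine_gaps gs) (p + L) ->
  block_start L (refine_gaps gs) (p + L + L) ->
  ~ block_start L (refine_gaps gs) (p + L + L + L).
Proof.
move=> L0 /block_start_refine[a Ha pa] /block_start_refine[b Hb ?]
  /block_start_refine[c Hc ?] /block_start_refine[d Hd ?].
move: (block_start_sep Ha Hb) (block_start_sep Ha Hc).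
move: (block_start_sep Hb Hc) (block_start_sep Hb Hd).
by case: pa => [|[|]]; lia.
Qed.

Lemma occ_Wf0_block_start gs p :
  occ [:: false] (blocks [:: false] gs) p -> block_start 1 gs p.
Proof.
elim: gs p => [|g gs IH] p /=; first by move/occP=> [? _]; left; lia.
case: (posnP p) => [-> _|p0 H]; first by left.
have {H} : occ [:: false] (nseq g true ++ blocks [:: false] gs) (p - 1).
  exact: (occ_drop (x := [:: false])).
right; case: g H => /= H; last by split; [lia | exact: IH].
have p1 : 1 < p.
  case: (ltnP 1 p) => // p_le1; move/occP: H => [_ /(_ 0 erefl)].
  by rewrite addn0 (_ : p - 1 = 0) //; lia.
split; first lia.
rewrite (_ : p - (1 + 1) = p - 1 - size [:: true]); last by rewrite /=; lia.
by apply/IH/(occ_drop (x := [:: true])) => //=; lia.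
Qed.

Lemma occ_Wf_block_start n gs p :
  occ (Wf n) (blocks (Wf n) gs) p -> block_start (size (Wf n)) gs p.
Proof.
elim: n gs p => [|n IH] gs p; first exact: occ_Wf0_block_start.
rewrite size_WfS [Wf n.+1]/= -blocks_refine_gaps.
move=> /occ_cat[/IH Hp /occ_cat[/IH HpL]]; rewrite -cat1s => /occ_cat[_ /IH HpLL].
apply: block_start_coarsen => //; first exact: size_Wf_gt0.
by rewrite (_ : _ + _ = p + size (Wf n) + size (Wf n) + size [:: true]) //=; lia.
Qed.

Lemma preceded_shift (x y v : seq bool) p :
  preceded x v p -> preceded x (y ++ v) (size y + p).
Proof.
move=> [Hx Ho]; split; first lia.
by rewrite (_ : _ - _ = size y + (p - size x)); [apply: occ_shift | lia].
Qed.

Lemma followed_shift (u x y v : seq bool) p :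
  followed u x v p -> followed u x (y ++ v) (size y + p).
Proof. by rewrite /followed -addnA; apply: occ_shift. Qed.

Lemma blocks_preceded w gs p : block_start (size w) gs p -> 0 < p ->
  preceded w (blocks w gs) p \/ preceded (w ++ [:: true]) (blocks w gs) p.
Proof.
elim: gs p => [|g gs IH] p /=; first by case=> [->|[]].
case=> [->|[Hp Hs]] // p0; rewrite catA.
have Ep : p = size (w ++ nseq g true) + (p - (size w + g)).
  by rewrite size_cat size_nseq; lia.
case: (posnP (p - (size w + g))) => [p_at | p_in].
  rewrite Ep p_at addn0; case: g {Hp Hs Ep p_at} => /=; [right | left].
    by split; rewrite ?subnn //; apply: occ_prefix.
  by split; rewrite cats0 ?subnn //; apply: occ_prefix.
by rewrite Ep; case: (IH _ Hs p_in) => /(preceded_shift (w ++ nseq g true));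
  [left | right].
Qed.

Lemma blocks_followed w gs p q :
  block_start (size w) gs p -> block_start (size w) gs q -> p < q ->
  followed w w (blocks w gs) p \/ followed w (true :: w) (blocks w gs) p.
Proof.
elim: gs p q => [|g gs IH] p q /=; first by case=> [->|[]] [->|[]].
case=> [->|[Hp Hs]] [->|[Hq Hqs]] pq //; first (have [s ->] := blocks_prefix w gs).
- rewrite /followed add0n; case: g {Hq Hqs} => /=; [right | left].
    exact: (occ_infix w (true :: w) s).
  exact: occ_infix.
- have Ep : p = size (w ++ nseq g true) + (p - (size w + g)).
    by rewrite size_cat size_nseq; lia.
  by rewrite catA Ep; case: (IH _ _ Hs Hqs ltac:(lia)) =>
    /(followed_shift (w ++ nseq g true)); [left | right].
Qed.

Lemma Wf_occ_preceded n k p : occ (Wf n) (Wf (n + k)) p -> 0 < p ->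
  preceded (Wf n) (Wf (n + k)) p \/ preceded (Wf n ++ [:: true]) (Wf (n + k)) p.
Proof. by rewrite Wf_blocks => /occ_Wf_block_start; apply: blocks_preceded. Qed.

Lemma Wf_occ_followed n k p q :
  occ (Wf n) (Wf (n + k)) p -> occ (Wf n) (Wf (n + k)) q -> p < q ->
  followed (Wf n) (Wf n) (Wf (n + k)) p \/
  followed (Wf n) (true :: Wf n) (Wf (n + k)) p.
Proof.
rewrite Wf_blocks => /occ_Wf_block_start Hp /occ_Wf_block_start Hq.
exact: blocks_followed.
Qed.

Lemma Wf_fourth_power_free n k p :
  ~ occ (Wf n ++ Wf n ++ Wf n ++ Wf n) (Wf (n + k)) p.
Proof.
have L0 := size_Wf_gt0 n.
case: k => [|k]; first by rewrite addn0 => /occP[]; rewrite !size_cat; lia.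
rewrite Wf_blocks /= => /occ_cat[Hp /occ_cat[HpL /occ_cat[HpLL HpLLL]]].
by apply: (no_four_block_starts L0 (occ_Wf_block_start Hp));
  apply: occ_Wf_block_start.
Qed.

Section LimitWord.

Variable w : nat -> bool.
Hypothesis w_prefixes : has_all_W_prefixes w.

Lemma occI_of_occ m u p : occ u (Wf m) p -> occI u w p.
Proof. by move/occP=> [Hs Hn] j Hj; rewrite (w_prefixes (m := m)) ?Hn //; lia. Qed.

Lemma occ_of_occI m u p : p + size u <= size (Wf m) -> occI u w p -> occ u (Wf m) p.
Proof.
move=> Hs Hu; apply/occP; split=> // j Hj.
by rewrite -(w_prefixes (m := m)) ?Hu //; lia.
Qed.

Lemma W_occ_preceded n p : occI (Wf n) w p -> 0 < p ->
  precededI (Wf n) w p \/ precededI (Wf n ++ [:: true]) w p.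
Proof.
move=> Hp p0; pose k := p + size (Wf n).
have /Wf_occ_preceded : occ (Wf n) (Wf (n + k)) p.
  by apply: occ_of_occI Hp; have := size_Wf_gt (n + k); lia.
by case/(_ p0) => -[? /occI_of_occ ?]; [left | right].
Qed.

Lemma W_occ_followed n p : occI (Wf n) w p ->
  followedI (Wf n) (Wf n) w p \/ followedI (Wf n) (true :: Wf n) w p.
Proof.
move=> Hp; pose k := p + size (Wf n).
have [s Hs] := Wf_prefix n k.
have Hlater : occ (Wf n) (Wf (n + k.+1)) (size (Wf (n + k))).
  by rewrite addnS /= {2}Hs -catA; apply: occ_infix.
have k_lt := size_Wf_gt (n + k).
have p_lt : p < size (Wf (n + k)) by lia.
have Hp' : occ (Wf n) (Wf (n + k.+1)) p.
  by apply: occ_of_occI Hp; rewrite addnS size_WfS; lia.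
by case: (Wf_occ_followed Hp' Hlater p_lt) => /occI_of_occ; [left | right].
Qed.

Lemma W_fourth_power_free n p : ~ occI (Wf n ++ Wf n ++ Wf n ++ Wf n) w p.
Proof.
move=> H; pose k := p + 4 * size (Wf n).
apply: (@Wf_fourth_power_free n k p); apply: occ_of_occI H.
by rewrite !size_cat; have := size_Wf_gt (n + k); lia.
Qed.

End LimitWord.

Theorem mainTheorem2 (n : nat) :
  (forall w : nat -> bool, has_all_W_prefixes w ->
     (forall p, occI (Wf n) w p -> (exists q, q < p /\ occI (Wf n) w q) ->
        precededI (Wf n) w p \/ precededI (Wf n ++ [:: true]) w p) /\
     (forall p, occI (Wf n) w p ->
        followedI (Wf n) (Wf n) w p \/ followedI (Wf n) (true :: Wf n) w p) /\
     (forall p, ~ occI (Wf n ++ Wf n ++ Wf n ++ Wf n) w p)) /\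
  (forall k : nat, let v := Wf (n + k) in
     (forall p, occ (Wf n) v p -> (exists q, q < p /\ occ (Wf n) v q) ->
        preceded (Wf n) v p \/ preceded (Wf n ++ [:: true]) v p) /\
     (forall p, occ (Wf n) v p -> (exists q, p < q /\ occ (Wf n) v q) ->
        followed (Wf n) (Wf n) v p \/ followed (Wf n) (true :: Wf n) v p) /\
     (forall p, ~ occ (Wf n ++ Wf n ++ Wf n ++ Wf n) v p)).
Proof.
split=> [w Hw | k /=]; split; [|split| |split].
- by move=> p Hp [q [qp _]]; apply: W_occ_preceded => //; lia.
- exact: W_occ_followed.
- exact: W_fourth_power_free.
- by move=> p Hp [q [qp _]]; apply: Wf_occ_preceded => //; lia.
- by move=> p Hp [q [pq Hq]]; apply: Wf_occ_followed Hq pq.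
- exact: Wf_fourth_power_free.
Qed.
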